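(* Let $G$ be a compact Hausdorff topological group acting continuously by isometries on a proper, purely $1$-unrectifiable metric space $\mathcal{M}$. Then $\mathcal{M}/G$ is purely $1$-unrectifiable.
   Context: $\mathcal{M}/G=\{\overline{Gx}:x\in\mathcal{M}\}$ with the metric $d_{\mathcal{M}/G}(\overline{Gx},\overline{Gy})=\inf\{d(x',y'):x'\in\overline{Gx},y'\in\overline{Gy}\}$ (the Hausdorff distance). A metric space is proper if closed balls are compact; it is purely $1$-unrectifiable if for every $A\subset\mathbb{R}$ and every Lipschitz $f:A\to\mathcal{M}$ the $1$-dimensional Hausdorff measure of $f(A)$ is $0$. *)

From HB Require Import structures.
From mathcomp Require Import all_boot all_order all_algebra.
From mathcomp Require Import all_classical all_reals all_analysis.
Set Implicit Arguments. Unset Strict Implicit. Unset Printing Implicit Defensive.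
Import Order.TTheory GRing.Theory Num.Theory.
Local Open Scope classical_set_scope.
Local Open Scope ring_scope.

Section Defs.
Variable R : realType.

Section Dist.
Variables (X : Type) (dX : X -> X -> R).

(* diameter (in \bar R); the diameter of the empty set is 0 *)
Definition diam (F : set X) : \bar R :=
  ereal_sup ([set 0%E] `|` [set (dX x y)%:E | x in F & y in F]).

Definition hausdorff1_delta (E : set X) (delta : R) : \bar R :=
  ereal_inf [set (\sum_(0 <= i <oo) diam (F i))%E
            | F in [set F : nat -> set X |
                     E `<=` \bigcup_i F i /\ (forall i, (diam (F i) <= delta%:E)%E)]].

(* 1-dimensional Hausdorff measure: H^1(E) = lim_{delta -> 0+} H^1_delta(E)
   (= sup over delta > 0, since H^1_delta is nonincreasing in delta) *)
Definition hausdorff1 (E : set X) : \bar R :=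
  ereal_sup [set hausdorff1_delta E delta | delta in [set d : R | 0 < d]].

Definition lipschitz_on (A : set R) (f : R -> X) : Prop :=
  exists L : R, forall x y, A x -> A y -> dX (f x) (f y) <= L * `|x - y|.

Definition purely_1_unrectifiable : Prop :=
  forall (A : set R) (f : R -> X), lipschitz_on A f -> hausdorff1 (f @` A) = 0%E.
End Dist.

Definition proper_metric (M : metricType R) : Prop :=
  forall (x : M) (r : R), compact [set y : M | mdist x y <= r].

Definition is_topological_group (G : topologicalType)
  (mul : G -> G -> G) (inv : G -> G) (one : G) : Prop :=
  [/\ (forall a b c, mul a (mul b c) = mul (mul a b) c),
      (forall a, mul one a = a /\ mul a one = a),
      (forall a, mul (inv a) a = one /\ mul a (inv a) = one),
      continuous (fun p : G * G => mul p.1 p.2) &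
      continuous inv].

Definition is_continuous_isometric_action (G : topologicalType)
  (mul : G -> G -> G) (one : G) (M : metricType R) (act : G -> M -> M) : Prop :=
  [/\ (forall x, act one x = x),
      (forall g h x, act (mul g h) x = act g (act h x)),
      (forall g x y, mdist (act g x) (act g y) = mdist x y) &
      continuous (fun p : G * M => act p.1 p.2)].

Definition orbit_closure (G : topologicalType) (M : metricType R)
  (act : G -> M -> M) (x : M) : set M :=
  closure [set act g x | g in [set: G]].

Definition orbit_space (G : topologicalType) (M : metricType R)
  (act : G -> M -> M) : Type :=
  {S : set M | exists x : M, S = orbit_closure act x}.

Definition orbit_dist (G : topologicalType) (M : metricType R)
  (act : G -> M -> M) (S T : orbit_space act) : R :=
  inf [set mdist x y | x in proj1_sig S & y in proj1_sig T].

End Defs.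

From HB Require Import structures.
From mathcomp Require Import all_boot all_order all_algebra.
From mathcomp Require Import all_classical all_reals all_analysis.
From mathcomp Require Import finmap ring lra.
Import Order.TTheory GRing.Theory Num.Theory.
Import numFieldNormedType.Exports ArrowAsProduct.
Local Open Scope classical_set_scope.
Local Open Scope ring_scope.
Set Implicit Arguments. Unset Strict Implicit. Unset Printing Implicit Defensive.

(* Let f : A -> M/G be L-Lipschitz, A a set of reals.  The proof lifts f to an
   L-Lipschitz map h : A -> M with f a = G (h a); then f(A) is the image of
   h(A) under the 1-Lipschitz quotient map x |-> Gx, and H^1(h(A)) = 0 forces
   H^1(f(A)) = 0.
   - 1-Lipschitz maps preserve H^1-null sets (HausdorffImage).
   - Lifting is a Lipschitz selection problem for the set-valued map a |-> f a
     (LipschitzSelection): finitely many points are lifted one by one along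
     the real order, and Tychonoff's theorem, applied to the product of the
     compact orbits, passes from finite sets of points to all of A.
   - Its hypotheses hold because orbits of a compact group are compact and the
     quotient map is a submetry: from every point of an orbit S, an orbit T is
     reached within distance d(S, T) (OrbitSpace). *)

Lemma diam_ge0 (R : realType) (X : Type) (dX : X -> X -> R) (F : set X) :
  (0 <= diam dX F)%E.
Proof. by apply: ereal_sup_ubound; left. Qed.

Lemma hausdorff1_ge0 (R : realType) (X : Type) (dX : X -> X -> R) (E : set X) :
  (0 <= hausdorff1 dX E)%E.
Proof.
apply: le_trans (ereal_sup_ubound _); last by exists 1; [exact: ltr01|].
apply/ereal_infP => _ [F _ <-]; apply: nneseries_ge0 => i _ _; exact: diam_ge0.
Qed.

(* A 1-Lipschitz map p does not increase diameters, H^1_delta or H^1: the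
   images of a delta-cover of E form a delta-cover of p(E). *)
Section HausdorffImage.
Variables (R : realType) (X Y : Type) (dX : X -> X -> R) (dY : Y -> Y -> R).
Variable p : X -> Y.
Hypothesis p_1lip : forall x y, dY (p x) (p y) <= dX x y.

Lemma diam_image_le (F : set X) : (diam dY (p @` F) <= diam dX F)%E.
Proof.
apply: ge_ereal_sup => _ [->|[_ [x Fx <-] [_ [y Fy <-] <-]]]; first exact: diam_ge0.
apply: (@le_trans _ _ (dX x y)%:E); first by rewrite lee_fin.
by apply: ereal_sup_ubound; right; exists x => //; exists y.
Qed.

Lemma hausdorff1_delta_image_le (E : set X) (delta : R) :
  (hausdorff1_delta dY (p @` E) delta <= hausdorff1_delta dX E delta)%E.
Proof.
apply/ereal_infP => _ [F [EF dF] <-].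
apply: le_trans (ereal_inf_lbound _) _.
  exists (fun i => p @` F i) => //; split => [_ [x /EF [i _ Fix] <-]|i].
    by exists i => //; exists x.
  exact: le_trans (diam_image_le _) (dF i).
apply: lee_nneseries => i _ *; [exact: diam_ge0 | exact: diam_image_le].
Qed.

Lemma hausdorff1_image_le (E : set X) :
  (hausdorff1 dY (p @` E) <= hausdorff1 dX E)%E.
Proof.
apply: ge_ereal_sup => _ [delta delta0 <-].
apply: le_trans (hausdorff1_delta_image_le E delta) (ereal_sup_ubound _).
by exists delta.
Qed.

Lemma hausdorff1_image_null (E : set X) :
  hausdorff1 dX E = 0%E -> hausdorff1 dY (p @` E) = 0%E.
Proof.
move=> E0; apply: le_anti; rewrite hausdorff1_ge0 andbT -E0.
exact: hausdorff1_image_le.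
Qed.
End HausdorffImage.

Lemma compact_bigcap_closed (T : topologicalType) (I : pointedType)
  (P : set T) (C : I -> set T) :
  compact P -> (forall i, closed (C i)) ->
  (forall D : {fset I}, P `&` \bigcap_(i in [set` D]) C i !=set0) ->
  P `&` \bigcap_i C i !=set0.
Proof.
move=> P_compact C_closed P_fip.
pose F i := P `&` C i.
have F_finI : finI setT F.
  move=> D _; have [x [Px Cx]] := P_fip D; exists x => i Di; split => //.
  exact: Cx.
have F_filter i : filter_from (finI_from setT F) id (F i).
  by exists (F i) => //; exact: finI_from1.
have [|x [Px x_cluster]] := P_compact _ (finI_filter F_finI).
  by exists (F point); [exact: finI_from1 | move=> ? []].
exists x; split => // i _; apply: C_closed.
move: x_cluster; rewrite clusterE => /(_ _ (F_filter i)).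
by apply: closureS => ? [].
Qed.

Lemma closed_premise (T : topologicalType) (Q : Prop) (C : set T) :
  closed C -> closed [set x | Q -> C x].
Proof.
move=> C_closed; have [q|nq] := pselect Q.
  rewrite (_ : [set x | Q -> C x] = C) //.
  by apply/seteqP; split=> x /=; [exact | move=> Cx _].
rewrite (_ : [set x | Q -> C x] = setT); first exact: closedT.
by apply/seteqP; split=> x //= _ /nq.
Qed.

Lemma closed_coord_dist_le (R : realType) (I : eqType) (M : metricType R)
  (a b : I) (r : R) :
  closed [set h : forall i : I, (fun=> M) i | mdist (h a) (h b) <= r].
Proof.
move=> h h_closure; rewrite /= leNgt; apply/negP => r_lt.
pose e := (mdist (h a) (h b) - r) / 2.
have e0 : 0 < e by rewrite /e; lra.
have near_a : nbhs h (proj a @^-1` ball (h a) e) :=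
  @proj_continuous I (fun=> M) a h _ (@nbhsx_ballx R M (h a) e e0).
have near_b : nbhs h (proj b @^-1` ball (h b) e) :=
  @proj_continuous I (fun=> M) b h _ (@nbhsx_ballx R M (h b) e e0).
have [k [k_le [ka kb]]] := h_closure _ (filterI near_a near_b).
move: k_le ka kb; rewrite /proj /= !ballEmdist /= /e => k_le ka kb.
have := metric_triangle (h a) (k a) (h b).
have := metric_triangle (k a) (k b) (h b).
rewrite (metric_sym (k b)); lra.
Qed.

Section LipschitzSelection.
Variables (R : realType) (M : metricType R) (A : set R) (K : R -> set M) (L : R).
Hypothesis K_compact : forall a, compact (K a).
Hypothesis K_nonempty : forall a, K a !=set0.
Hypothesis K_lipschitz : forall a b x, A a -> A b -> K a x ->
  exists2 y, K b y & mdist x y <= L * `|a - b|.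

Definition lipschitz_selection_on (B : set R) (h : R -> M) : Prop :=
  (forall a, K a (h a)) /\
  forall a b, B a -> B b -> mdist (h a) (h b) <= L * `|a - b|.

(* A selection that is Lipschitz on m < s_1 < ... extends to c < m: choose h c
   in K c close to h m; the triangle inequality through h m does the rest. *)
Lemma selection_extend (c m : R) (s : seq R) (h : R -> M) :
  sorted <%R [:: c, m & s] -> A c -> A m ->
  lipschitz_selection_on [set` m :: s] h ->
  exists h', lipschitz_selection_on [set` [:: c, m & s]] h'.
Proof.
move=> cms Ac Am [h_sel h_lip].
have [y Kcy hm_y] := K_lipschitz Am Ac (h_sel m).
have m_le b : b \in m :: s -> m <= b.
  rewrite in_cons => /predU1P[-> //|sb]; apply: ltW.
  by move: cms => /= /andP[_ /(order_path_min lt_trans) /allP]; apply.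
have c_lt b : b \in m :: s -> c < b.
  by move=> sb; apply: lt_le_trans (m_le b sb); move: cms => /= /andP[].
have y_lip b : b \in m :: s -> mdist y (h b) <= L * `|c - b|.
  move=> sb; apply: le_trans (metric_triangle y (h m) (h b)) _.
  rewrite metric_sym in hm_y.
  have -> : L * `|c - b| = L * `|m - c| + L * `|m - b|.
    have cm := c_lt m (mem_head _ _); have mb := m_le b sb.
    rewrite (distrC c) (distrC m b) !ger0_norm ?subr_ge0 //; [ring | exact: ltW | lra].
  by apply: lerD => //; exact: h_lip (mem_head _ _) sb.
have h_ne_c b : b \in m :: s -> (b == c) = false.
  by move=> sb; apply: gt_eqF; exact: c_lt.
exists (fun a => if a == c then y else h a); split.
  by move=> a; case: eqP => [->|].
move=> a b /=; rewrite in_cons => /predU1P[->|sa]; rewrite in_cons => /predU1P[->|sb].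
- by rewrite eqxx mdistxx subrr normr0 mulr0.
- by rewrite eqxx h_ne_c //; exact: y_lip.
- by rewrite eqxx h_ne_c // metric_sym distrC; exact: y_lip.
- by rewrite !h_ne_c //; exact: h_lip.
Qed.
Lemma sorted_selection (s : seq R) :
  sorted <%R s -> (forall a, a \in s -> A a) ->
  exists h, lipschitz_selection_on [set` s] h.
Proof.
elim: s => [_ _|c s IH cs sA].
  by have [h0 h0_sel] := choice K_nonempty; exists h0.
have [h h_sel] := IH (path_sorted cs) (fun a sa => sA a (mem_behead (s := c :: s) sa)).
case: s => [|m s] in IH cs sA h_sel *; last first.
  by apply: selection_extend h_sel => //; apply: sA; rewrite !inE eqxx ?orbT.
exists h; split=> [|a b]; first by case: h_sel.
by rewrite /= !inE => /eqP -> /eqP ->; rewrite mdistxx subrr normr0 mulr0.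
Qed.

Lemma finite_selection (s : seq R) :
  (forall a, a \in s -> A a) -> exists h, lipschitz_selection_on [set` s] h.
Proof.
move=> sA; set t := sort <=%R (undup s).
have t_sorted : sorted <%R t by rewrite sort_lt_sorted undup_uniq.
have tA a : a \in t -> A a by rewrite mem_sort mem_undup; exact: sA.
have [h [h_sel h_lip]] := sorted_selection t_sorted tA.
by exists h; split=> // a b sa sb; apply: h_lip; rewrite /= mem_sort mem_undup.
Qed.

(* Tychonoff: the selections form a compact box in M^R, on which each
   constraint d(h a, h b) <= L |a - b| is closed; finitely many constraints
   are met by finite_selection, hence all of them are. *)
Lemma lipschitz_selection : exists h, lipschitz_selection_on A h.
Proof.
pose box := [set h : forall a : R, (fun=> M) a | forall a, K a (h a)].
pose lip (ab : R * R) := [set h : forall a : R, (fun=> M) a |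
  A ab.1 /\ A ab.2 -> mdist (h ab.1) (h ab.2) <= L * `|ab.1 - ab.2|].
have lip_closed ab : closed (lip ab).
  by apply: closed_premise; exact: closed_coord_dist_le.
have [|h [box_h h_lip]] :=
  compact_bigcap_closed (tychonoff K_compact : compact box) lip_closed.
  move=> D; pose s := [seq a <- flatten [seq [:: ab.1; ab.2] | ab <- D] | `[< A a >]].
  have [|h [h_sel h_lip]] := @finite_selection s.
    by move=> a; rewrite mem_filter => /andP[/asboolP].
  have s_mem ab a : ab \in D -> A a -> a \in [:: ab.1; ab.2] -> a \in s.
    move=> Dab Aa ab_a; rewrite mem_filter; apply/andP; split; first exact/asboolP.
    by apply/flattenP; exists [:: ab.1; ab.2] => //; apply/mapP; exists ab.
  exists h; split => // ab Dab [A1 A2]; apply: h_lip; apply: (s_mem ab) => //;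
    by rewrite !inE eqxx ?orbT.
by exists h; split => // a b Aa Ab; exact: (h_lip (a, b) I (conj Aa Ab)).
Qed.

End LipschitzSelection.

Lemma mdist_continuous (R : realType) (M : metricType R) (x : M) :
  continuous (mdist x).
Proof.
move=> y; apply/cvgrPdist_lt => e e0; near=> z.
have yz : mdist y z < e.
  by near: z; have := @nbhsx_ballx R M y e e0; rewrite ballEmdist.
have := metric_triangle x y z; have := metric_triangle x z y.
rewrite (metric_sym z y) ltr_norml; lra.
Unshelve. all: by end_near.
Qed.

Section OrbitSpace.
Variables (R : realType) (G : topologicalType) (mul : G -> G -> G)
  (inv : G -> G) (one : G) (M : metricType R) (act : G -> M -> M).
Hypothesis G_group : is_topological_group mul inv one.
Hypothesis G_compact : compact [set: G].
Hypothesis act_isometric : is_continuous_isometric_action mul one act.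

Definition orbit (x : M) : set M := [set act g x | g in [set: G]].

Lemma orbit_continuous (x : M) : continuous (act^~ x).
Proof.
case: act_isometric => _ _ _ act_cont g.
apply: (@continuous_comp _ _ _ (fun g => (g, x)) (fun p : G * M => act p.1 p.2));
  last exact: act_cont.
by apply: cvg_pair; [exact: cvg_id | exact: cvg_cst].
Qed.

Lemma orbit_compact (x : M) : compact (orbit x).
Proof.
by apply: continuous_compact => //; apply: continuous_subspaceT; exact: orbit_continuous.
Qed.

(* For compact G orbits are compact, hence closed: the closure is superfluous. *)
Lemma orbit_closureE (x : M) : orbit_closure act x = orbit x.
Proof.
apply/esym/closure_id; apply: compact_closed; [exact: metric_hausdorff | exact: orbit_compact].
Qed.

Lemma orbit_spaceP (S : orbit_space act) : exists x, proj1_sig S = orbit x.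
Proof. by case: S => /= S [x ->]; exists x; exact: orbit_closureE. Qed.

Lemma orbit_self (x : M) : orbit x x.
Proof. by case: act_isometric => act1 _ _ _; exists one. Qed.

Lemma orbit_space_compact (S : orbit_space act) : compact (proj1_sig S).
Proof. by have [x ->] := orbit_spaceP S; exact: orbit_compact. Qed.

Lemma orbit_space_nonempty (S : orbit_space act) : proj1_sig S !=set0.
Proof. by have [x ->] := orbit_spaceP S; exists x; exact: orbit_self. Qed.

Lemma orbit_transitive (x y z : M) :
  orbit x y -> orbit x z -> exists g, z = act g y.
Proof.
case=> a _ <- [b _ <-]; exists (mul b (inv a)).
case: act_isometric => act1 actM _ _; case: G_group => _ _ mulVg _ _.
by rewrite actM -(actM (inv a)) (proj1 (mulVg a)) act1.
Qed.

Lemma orbit_invariant (x y : M) (g : G) : orbit x y -> orbit x (act g y).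
Proof. by case=> b _ <-; exists (mul g b) => //; case: act_isometric => _ ->. Qed.

Lemma orbit_eq (x y : M) : orbit x y -> orbit y = orbit x.
Proof.
move=> xy; apply/seteqP; split => z.
  by case=> g _ <-; exact: orbit_invariant.
by move=> xz; have [g ->] := orbit_transitive xy xz; exists g.
Qed.

Lemma orbit_dist_le (S T : orbit_space act) (x y : M) :
  proj1_sig S x -> proj1_sig T y -> orbit_dist S T <= mdist x y.
Proof.
move=> Sx Ty; apply: ge_inf; first by exists 0 => _ [u _ [v _ <-]]; exact: mdist_ge0.
by exists x => //; exists y.
Qed.

(* Since the action is isometric and transitive on S,
   every pair (x', y') in S x T is matched by a pair (x, g y'), and the distance
   from x to the compact orbit T is attained. *)
Lemma orbit_dist_attained (S T : orbit_space act) (x : M) :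
  proj1_sig S x -> exists2 y, proj1_sig T y & mdist x y <= orbit_dist S T.
Proof.
move=> Sx; have T0 := orbit_space_nonempty T.
have dx_cont : {within proj1_sig T, continuous (mdist x)}.
  by apply: continuous_subspaceT; exact: mdist_continuous.
have [y Ty y_min] := compact_EVT_min T0 (orbit_space_compact (S := T)) dx_cont.
exists y; first by rewrite in_setE in Ty.
apply: lb_le_inf.
  by case: T0 => z Tz; exists (mdist x z); exists x => //; exists z.
move=> _ [x' Sx' [y' Ty' <-]].
have [[s Ss] [t Tt]] := (orbit_spaceP S, orbit_spaceP T).
rewrite Ss in Sx Sx'; rewrite Tt in Ty y_min Ty'.
have [g xE] := orbit_transitive Sx' Sx.
have [_ _ act_iso _] := act_isometric; rewrite -(act_iso g x' y') -xE.
by apply: y_min; rewrite in_setE; exact: orbit_invariant.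
Qed.

Definition orbit_of (x : M) : orbit_space act :=
  exist _ (orbit_closure act x) (ex_intro _ x erefl).

Lemma orbit_of_1lipschitz (x y : M) :
  orbit_dist (orbit_of x) (orbit_of y) <= mdist x y.
Proof. by apply: orbit_dist_le; rewrite /= orbit_closureE; exact: orbit_self. Qed.

Lemma orbit_ofE (S : orbit_space act) (y : M) : proj1_sig S y -> S = orbit_of y.
Proof.
case: S => /= S [x Sx] xy; apply: eq_exist.
by rewrite Sx !orbit_closureE (orbit_eq (x := x)) // -orbit_closureE -Sx.
Qed.

End OrbitSpace.

Theorem corollary4p11 (R : realType) (G : topologicalType)
  (mul : G -> G -> G) (inv : G -> G) (one : G) (M : metricType R)
  (act : G -> M -> M) :
  is_topological_group mul inv one ->
  hausdorff_space G ->
  compact [set: G] ->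
  is_continuous_isometric_action mul one act ->
  proper_metric M ->
  purely_1_unrectifiable (@mdist R M) ->
  purely_1_unrectifiable (@orbit_dist R G M act).
Proof.
move=> G_group _ G_compact act_isometric _ M_pu1u A f [L f_lip].
have f_lip_sets a b x : A a -> A b -> proj1_sig (f a) x ->
    exists2 y, proj1_sig (f b) y & mdist x y <= L * `|a - b|.
  move=> Aa Ab fax.
  have [y fby xy] := orbit_dist_attained G_group G_compact act_isometric (f b) fax.
  by exists y => //; exact: le_trans xy (f_lip a b Aa Ab).
have [h [h_sel h_lip]] := lipschitz_selection
  (fun a => orbit_space_compact G_compact act_isometric (S := f a))
  (fun a => orbit_space_nonempty G_compact act_isometric (f a)) f_lip_sets.
have -> : f @` A = orbit_of act @` (h @` A).
  rewrite image_comp; apply: eq_imagel => a _.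
  exact: (orbit_ofE G_group G_compact act_isometric (h_sel a)).
apply: (hausdorff1_image_null (orbit_of_1lipschitz G_compact act_isometric)).
by apply: M_pu1u; exists L.
Qed.
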